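(* Let $(X,\le)$ be a poset and $E$ an equivalence relation on $X$ with ${\le}\subseteq E$. Let $\alpha:X\to X$ be an order automorphism of $(X,\le)$ and $\beta:X\to X$ a self-inverse dual order automorphism of $(X,\le)$ such that $\alpha,\beta\subseteq E$ and $\beta=\alpha\circ\beta\circ\alpha$. Set $1={\le}$ and $0=\alpha\circ({\le}^c)^\smile$, and for $R\in\mathsf{Up}(\mathbf E)$ define $R'=\alpha\circ\beta\circ R^c\circ\beta$. Then $\mathbf{Dq}(\mathbf E)=\langle\mathsf{Up}(\mathbf E),\cap,\cup,\circ,1,0,{\sim},-,'\rangle$ is a distributive quasi relation algebra. If $\alpha$ is the identity, then $\mathbf{Dq}(\mathbf E)$ is a cyclic distributive quasi relation algebra.
   Context: For binary relations: converse $R^\smile=\{(x,y)\mid(y,x)\in R\}$; composition $R\circ S=\{(x,y)\mid\exists z\,((x,z)\in R,(z,y)\in S)\}$. Functions are identified with their graphs $\{(x,\gamma(x))\}$. For a poset $(X,\le)$ and an equivalence relation $E\supseteq{\le}$, $E$ is partially ordered by $(u,v)\preceq(x,y)$ iff $x\le u$ and $v\le y$; $\mathbf E=(E,\preceq)$, $\mathsf{Up}(\mathbf E)$ is its set of up-sets. For $R\subseteq E$, $R^c=E\setminus R$. On $\mathsf{Up}(\mathbf E)$: $R\backslash S=(R^\smile\circ S^c)^c$, $R/S=(R^c\circ S^\smile)^c$, ${\sim}R=R\backslash 0$, $-R=0/R$. Order automorphism: bijection with $x\le y\iff\alpha(x)\le\alpha(y)$; dual order automorphism: bijection with $x\le y\iff\beta(y)\le\beta(x)$;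 self-inverse: $\beta\circ\beta=\mathrm{id}_X$. A quasi relation algebra is an algebra $\langle A,\wedge,\vee,\cdot,1,0,{\sim},-,'\rangle$ where $\langle A,\wedge,\vee,\cdot,1\rangle$ with residuals $\backslash,/$ is a residuated lattice, $0\in A$, ${\sim}a=a\backslash0$, $-a=0/a$, ${\sim}{-}a={-}{\sim}a=a$, and $'$ satisfies $a''=a$, $(a\vee b)'=a'\wedge b'$, $({\sim}a)'=-(a')$, $(a\cdot b)'=a'+b'$ where $a+b={\sim}(-b\cdot-a)$. It is distributive if its lattice reduct is distributive, cyclic if ${\sim}a=-a$ for all $a$. *)

Set Implicit Arguments.

Section Rels.
Variable X : Type.
Definition rel := X -> X -> Prop.

Definition conv (R : rel) : rel := fun x y => R y x.
Definition comp (R S : rel) : rel := fun x y => exists z, R x z /\ S z y.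
Definition graph (f : X -> X) : rel := fun x y => y = f x.

(* relative complement R^c = E \ R *)
Definition rcompl (E R : rel) : rel := fun x y => E x y /\ ~ R x y.

Definition is_poset (le : rel) : Prop :=
  (forall x, le x x) /\
  (forall x y, le x y -> le y x -> x = y) /\
  (forall x y z, le x y -> le y z -> le x z).

Definition is_equivalence (E : rel) : Prop :=
  (forall x, E x x) /\ (forall x y, E x y -> E y x) /\
  (forall x y z, E x y -> E y z -> E x z).

Definition subrel (R S : rel) : Prop := forall x y, R x y -> S x y.

Definition is_bijection (f : X -> X) : Prop :=
  exists g : X -> X, (forall x, g (f x) = x) /\ (forall y, f (g y) = y).

Definition order_automorphism (le : rel) (a : X -> X) : Prop :=
  is_bijection a /\ (forall x y, le x y <-> le (a x) (a y)).

Definition dual_order_automorphism (le : rel) (b : X -> X) : Prop :=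
  is_bijection b /\ (forall x y, le x y <-> le (b y) (b x)).

Definition self_inverse (b : X -> X) : Prop := forall x, b (b x) = x.

(* (u,v) <= (x,y) in E  iff  x <= u and v <= y ; up-sets of (E, <=) *)
Definition up_set (le E : rel) (R : rel) : Prop :=
  subrel R E /\
  (forall u v x y, R u v -> E x y -> le x u -> le v y -> R x y).

Definition Dq_meet (R S : rel) : rel := fun x y => R x y /\ S x y.
Definition Dq_join (R S : rel) : rel := fun x y => R x y \/ S x y.
Definition Dq_one (le : rel) : rel := le.
Definition Dq_zero (le E : rel) (a : X -> X) : rel :=
  comp (graph a) (conv (rcompl E le)).
Definition Dq_ldiv (E : rel) (R S : rel) : rel :=
  rcompl E (comp (conv R) (rcompl E S)).
Definition Dq_rdiv (E : rel) (R S : rel) : rel :=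
  rcompl E (comp (rcompl E R) (conv S)).
Definition Dq_prime (E : rel) (a b : X -> X) (R : rel) : rel :=
  comp (comp (comp (graph a) (graph b)) (rcompl E R)) (graph b).
End Rels.

(* Abstract algebra on a carrier subset S of a type T (equality is Leibniz). *)
Section QRA.
Variable T : Type.
Variable S : T -> Prop.
Variables (meet join mul ldiv rdiv : T -> T -> T) (one zero : T)
          (lneg rneg prime : T -> T).

Definition lat_le (a b : T) : Prop := join a b = b.

Definition is_residuated_lattice : Prop :=
  (forall a b, S a -> S b -> S (meet a b)) /\
  (forall a b, S a -> S b -> S (join a b)) /\
  (forall a b, S a -> S b -> S (mul a b)) /\
  (forall a b, S a -> S b -> S (ldiv a b)) /\
  (forall a b, S a -> S b -> S (rdiv a b)) /\
  S one /\
  (forall a b c, S a -> S b -> S c -> meet a (meet b c) = meet (meet a b) c) /\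
  (forall a b c, S a -> S b -> S c -> join a (join b c) = join (join a b) c) /\
  (forall a b, S a -> S b -> meet a b = meet b a) /\
  (forall a b, S a -> S b -> join a b = join b a) /\
  (forall a b, S a -> S b -> meet a (join a b) = a) /\
  (forall a b, S a -> S b -> join a (meet a b) = a) /\
  (forall a b c, S a -> S b -> S c -> mul a (mul b c) = mul (mul a b) c) /\
  (forall a, S a -> mul one a = a) /\
  (forall a, S a -> mul a one = a) /\
  (forall a b c, S a -> S b -> S c ->
     (lat_le (mul a b) c <-> lat_le b (ldiv a c)) /\
     (lat_le (mul a b) c <-> lat_le a (rdiv c b))).

Definition qra_plus (a b : T) : T := lneg (mul (rneg b) (rneg a)).

Definition is_quasi_relation_algebra : Prop :=
  is_residuated_lattice /\
  S zero /\
  (forall a, S a -> lneg a = ldiv a zero) /\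
  (forall a, S a -> rneg a = rdiv zero a) /\
  (forall a, S a -> S (prime a)) /\
  (forall a, S a -> lneg (rneg a) = a /\ rneg (lneg a) = a) /\
  (forall a, S a -> prime (prime a) = a) /\
  (forall a b, S a -> S b -> prime (join a b) = meet (prime a) (prime b)) /\
  (forall a, S a -> prime (lneg a) = rneg (prime a)) /\
  (forall a b, S a -> S b -> prime (mul a b) = qra_plus (prime a) (prime b)).

Definition is_distributive : Prop :=
  forall a b c, S a -> S b -> S c ->
    meet a (join b c) = join (meet a b) (meet a c).

Definition is_cyclic : Prop := forall a, S a -> lneg a = rneg a.
End QRA.

Definition Dq_is_DqRA (X : Type) (le E : rel X) (a b : X -> X) : Prop :=
  is_quasi_relation_algebra (up_set le E)
    (@Dq_meet X) (@Dq_join X) (@comp X) (Dq_ldiv E) (Dq_rdiv E)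
    (Dq_one le) (Dq_zero le E a)
    (fun R => Dq_ldiv E R (Dq_zero le E a))
    (fun R => Dq_rdiv E (Dq_zero le E a) R)
    (Dq_prime E a b)
  /\ is_distributive (up_set le E) (@Dq_meet X) (@Dq_join X).

Definition Dq_is_cyclic (X : Type) (le E : rel X) (a : X -> X) : Prop :=
  is_cyclic (up_set le E)
    (fun R => Dq_ldiv E R (Dq_zero le E a))
    (fun R => Dq_rdiv E (Dq_zero le E a) R).

(* An up-set R of (E, ⪯) is a subrelation of E that is antitone in its first
   and monotone in its second argument; composition and the residuals taken
   relative to E preserve this, and residuation is the usual one for relations.
   Since 0 x y holds iff E y (α x) and not y ≤ α x, the two linear negations
   read  ~R x y <-> E x y /\ ~ R (α⁻¹ y) x  and  -R x y <-> E x y /\ ~ R y (α x),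
   so they are mutually inverse.  Similarly R' x y <-> E x y /\ ~ R (βα x) (β y).
   From β = αβα and ββ = id we get (βα)(βα) = id, which makes ' an involution;
   (~R)' and -(R') both reduce to E x y /\ R (βα y) (βα x); and for
   (R;S)' = R' + S' the witnesses of the two compositions correspond under
   z |-> βα z.  When α = id both negations become E x y /\ ~ R y x. *)

From Stdlib Require Import Classical FunctionalExtensionality PropExtensionality.

Set Implicit Arguments.
Unset Strict Implicit.

Lemma rel_ext (X : Type) (R S : rel X) :
  (forall x y, R x y <-> S x y) -> R = S.
Proof.
  intro H. apply functional_extensionality; intro x.
  apply functional_extensionality; intro y.
  apply propositional_extensionality, H.
Qed.

Lemma comp_graph (X : Type) (f h : X -> X) :
  comp (graph f) (graph h) = graph (fun x => h (f x)).
Proof.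
  apply rel_ext; intros x y; unfold comp, graph; split.
  - intros [z [-> ->]]; reflexivity.
  - intros ->; exists (f x); auto.
Qed.

Lemma graph_inj (X : Type) (f h : X -> X) :
  graph f = graph h -> forall x, f x = h x.
Proof. intros H x. change (graph h x (f x)). rewrite <- H. reflexivity. Qed.

Lemma lat_le_Dq_join (X : Type) (R S : rel X) :
  lat_le (@Dq_join X) R S <-> subrel R S.
Proof.
  unfold lat_le; split.
  - intros H x y HR. rewrite <- H. now left.
  - intro H. apply rel_ext; intros x y; unfold Dq_join. firstorder.
Qed.

Lemma Dq_distributive (X : Type) (U : rel X -> Prop) :
  is_distributive U (@Dq_meet X) (@Dq_join X).
Proof.
  intros R S T _ _ _. apply rel_ext; intros x y; unfold Dq_meet, Dq_join; tauto.
Qed.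

Lemma and_not_and_not_iff (P Q R : Prop) :
  (R -> P) -> (P -> Q) -> (P /\ ~ (Q /\ ~ R) <-> R).
Proof. intros RP PQ; split; [intros [p n]; apply NNPP; auto | tauto]. Qed.

Section UpSets.
Variables (X : Type) (le E : rel X).
Hypothesis le_refl : forall x, le x x.
Hypothesis le_trans : forall x y z, le x y -> le y z -> le x z.
Hypothesis le_E : subrel le E.
Hypothesis E_sym : forall x y, E x y -> E y x.
Hypothesis E_trans : forall x y z, E x y -> E y z -> E x z.

Local Notation U := (up_set le E).

Lemma up_set_E R x y : U R -> R x y -> E x y.
Proof. intros [RE _]; apply RE. Qed.

Lemma up_set_mono R u v x y : U R -> R u v -> le x u -> le v y -> R x y.
Proof.
  intros [RE Rup] Ruv xu vy. apply (Rup u v); auto.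
  apply E_trans with u; [now apply le_E|].
  apply E_trans with v; [now apply RE | now apply le_E].
Qed.

Lemma up_set_intro R :
  subrel R E -> (forall u v x y, R u v -> le x u -> le v y -> R x y) -> U R.
Proof. intros RE Rup; split; eauto. Qed.

Lemma up_set_full : U E.
Proof.
  apply up_set_intro; [now intros x y|].
  intros u v x y Euv xu vy. apply E_trans with u; [now apply le_E|].
  apply E_trans with v; [exact Euv | now apply le_E].
Qed.

Lemma up_set_meet R S : U R -> U S -> U (Dq_meet R S).
Proof.
  intros HR HS. apply up_set_intro.
  - intros x y [Rxy _]. exact (up_set_E HR Rxy).
  - intros u v x y [Ruv Suv] xu vy. split; eapply up_set_mono; eauto.
Qed.

Lemma up_set_join R S : U R -> U S -> U (Dq_join R S).
Proof.
  intros HR HS. apply up_set_intro.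
  - intros x y [Rxy|Sxy]; [exact (up_set_E HR Rxy) | exact (up_set_E HS Sxy)].
  - intros u v x y [Ruv|Suv] xu vy; [left|right]; eapply up_set_mono; eauto.
Qed.

Lemma up_set_comp R S : U R -> U S -> U (comp R S).
Proof.
  intros HR HS. apply up_set_intro.
  - intros x y [z [Rxz Szy]]. exact (E_trans (up_set_E HR Rxz) (up_set_E HS Szy)).
  - intros u v x y [z [Ruz Szv]] xu vy. exists z; split; eapply up_set_mono; eauto.
Qed.

Lemma up_set_ldiv R S : U R -> U S -> U (Dq_ldiv E R S).
Proof.
  intros HR HS. apply up_set_intro; [now intros x y [Exy _]|].
  intros u v x y [Euv nRS] xu vy.
  split; [exact (up_set_mono up_set_full Euv xu vy)|].
  intros [z [Rzx [Ezy nSzy]]]. apply nRS. exists z. split; [|split].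
  - exact (up_set_mono HR Rzx (le_refl z) xu).
  - apply E_trans with y; [exact Ezy|]. apply E_sym, le_E, vy.
  - intro Szv. apply nSzy. eapply up_set_mono; eauto.
Qed.

Lemma up_set_rdiv R S : U R -> U S -> U (Dq_rdiv E R S).
Proof.
  intros HR HS. apply up_set_intro; [now intros x y [Exy _]|].
  intros u v x y [Euv nRS] xu vy.
  split; [exact (up_set_mono up_set_full Euv xu vy)|].
  intros [z [[Exz nRxz] Syz]]. apply nRS. exists z. split; [split|].
  - apply E_trans with x; [apply E_sym, le_E, xu | exact Exz].
  - intro Ruz. exact (nRxz (up_set_mono HR Ruz xu (le_refl z))).
  - exact (up_set_mono HS Syz vy (le_refl z)).
Qed.

Lemma up_set_one : U (Dq_one le).
Proof. apply up_set_intro; [exact le_E|]. unfold Dq_one; eauto. Qed.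

Lemma comp_one_l R : U R -> comp (Dq_one le) R = R.
Proof.
  intro HR; apply rel_ext; intros x y; unfold Dq_one; split.
  - intros [z [xz Rzy]]. eapply up_set_mono; eauto.
  - intro Rxy. exists x; auto.
Qed.

Lemma comp_one_r R : U R -> comp R (Dq_one le) = R.
Proof.
  intro HR; apply rel_ext; intros x y; unfold Dq_one; split.
  - intros [z [Rxz zy]]. eapply up_set_mono; eauto.
  - intro Rxy. exists y; auto.
Qed.

Lemma comp_sub_ldiv R S T : U R -> U S ->
  subrel (comp R S) T <-> subrel S (Dq_ldiv E R T).
Proof.
  intros HR HS; split.
  - intros H x y Sxy. split; [exact (up_set_E HS Sxy)|].
    intros [z [Rzx [_ nTzy]]]. apply nTzy, H. now exists x.
  - intros H x y [z [Rxz Szy]]. apply NNPP; intro nTxy.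
    apply (proj2 (H z y Szy)). exists x.
    exact (conj Rxz (conj (E_trans (up_set_E HR Rxz) (up_set_E HS Szy)) nTxy)).
Qed.

Lemma comp_sub_rdiv R S T : U R -> U S ->
  subrel (comp R S) T <-> subrel R (Dq_rdiv E T S).
Proof.
  intros HR HS; split.
  - intros H x y Rxy. split; [exact (up_set_E HR Rxy)|].
    intros [z [[_ nTxz] Syz]]. apply nTxz, H. now exists y.
  - intros H x y [z [Rxz Szy]]. apply NNPP; intro nTxy.
    apply (proj2 (H x z Rxz)). exists y.
    exact (conj (conj (E_trans (up_set_E HR Rxz) (up_set_E HS Szy)) nTxy) Szy).
Qed.

Lemma Dq_residuated_lattice :
  is_residuated_lattice U (@Dq_meet X) (@Dq_join X) (@comp X)
    (Dq_ldiv E) (Dq_rdiv E) (Dq_one le).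
Proof.
  split; [exact up_set_meet|]. split; [exact up_set_join|].
  split; [exact up_set_comp|]. split; [exact up_set_ldiv|].
  split; [exact up_set_rdiv|]. split; [exact up_set_one|].
  do 6 (split; [intros; apply rel_ext; intros; unfold Dq_meet, Dq_join; tauto|]).
  split; [intros; apply rel_ext; intros; unfold comp; firstorder|].
  split; [exact comp_one_l|]. split; [exact comp_one_r|].
  intros R S T HR HS _. rewrite !lat_le_Dq_join.
  split; [apply comp_sub_ldiv | apply comp_sub_rdiv]; assumption.
Qed.

Section Negations.
Variables a g : X -> X.
Hypothesis a_le : forall x y, le x y <-> le (a x) (a y).
Hypothesis ag : forall y, a (g y) = y.
Hypothesis ga : forall x, g (a x) = x.
Hypothesis a_E : forall x, E x (a x).

Local Notation Z := (Dq_zero le E a).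
Local Notation lneg R := (Dq_ldiv E R Z).
Local Notation rneg R := (Dq_rdiv E Z R).

Lemma Dq_zero_iff x y : Z x y <-> E y (a x) /\ ~ le y (a x).
Proof.
  unfold Dq_zero, comp, graph, conv, rcompl; split.
  - intros [z [-> H]]; exact H.
  - intro H; exists (a x); auto.
Qed.

Lemma E_g y : E (g y) y.
Proof. rewrite <- (ag y) at 2. apply a_E. Qed.

Lemma up_set_zero : U Z.
Proof.
  apply up_set_intro.
  - intros x y Zxy. apply Dq_zero_iff in Zxy as [Eyax _].
    exact (E_trans (a_E x) (E_sym Eyax)).
  - intros u v x y Zuv xu vy. apply Dq_zero_iff in Zuv as [Evau nle].
    pose proof (proj1 (a_le x u) xu) as axau.
    apply Dq_zero_iff; split.
    + apply E_trans with v; [exact (E_sym (le_E vy))|].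
      exact (E_trans Evau (E_sym (le_E axau))).
    + intro yax. apply nle. eauto.
Qed.

Lemma lneg_iff R x y : U R -> lneg R x y <-> E x y /\ ~ R (g y) x.
Proof.
  intro HR; split.
  - intros [Exy nRZ]; split; [exact Exy|]. intro Rgyx. apply nRZ.
    exists (g y). split; [exact Rgyx|]. split; [apply E_g|].
    rewrite Dq_zero_iff, ag. intros [_ nle]. exact (nle (le_refl y)).
  - intros [Exy nR]; split; [exact Exy|]. intros [z [Rzx [Ezy nZzy]]].
    apply nR. apply (up_set_mono HR Rzx); [|apply le_refl].
    apply a_le. rewrite ag. apply NNPP; intro nle. apply nZzy, Dq_zero_iff.
    split; [exact (E_trans (E_sym Ezy) (a_E z)) | exact nle].
Qed.

Lemma rneg_iff R x y : U R -> rneg R x y <-> E x y /\ ~ R y (a x).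
Proof.
  intro HR; split.
  - intros [Exy nZR]; split; [exact Exy|]. intro Ryax. apply nZR.
    exists (a x). split; [|exact Ryax]. split; [apply a_E|].
    rewrite Dq_zero_iff. intros [_ nle]. exact (nle (le_refl (a x))).
  - intros [Exy nR]; split; [exact Exy|]. intros [z [[Exz nZxz] Ryz]].
    apply nR. apply (up_set_mono HR Ryz (le_refl y)).
    apply NNPP; intro nle. apply nZxz, Dq_zero_iff.
    split; [exact (E_trans (E_sym Exz) (a_E x)) | exact nle].
Qed.

Lemma lneg_rneg R : U R -> lneg (rneg R) = R.
Proof.
  intro HR. apply rel_ext; intros x y.
  rewrite (lneg_iff _ _ (up_set_rdiv up_set_zero HR)), (rneg_iff _ _ HR), ag.
  apply and_not_and_not_iff; [exact (up_set_E HR)|].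
  intro Exy. exact (E_trans (E_g y) (E_sym Exy)).
Qed.

Lemma rneg_lneg R : U R -> rneg (lneg R) = R.
Proof.
  intro HR. apply rel_ext; intros x y.
  rewrite (rneg_iff _ _ (up_set_ldiv HR up_set_zero)), (lneg_iff _ _ HR), ga.
  apply and_not_and_not_iff; [exact (up_set_E HR)|].
  intro Exy. exact (E_trans (E_sym Exy) (a_E x)).
Qed.

Lemma lneg_eq_rneg_of_id R : (forall x, a x = x) -> U R -> lneg R = rneg R.
Proof.
  intros a_id HR. apply rel_ext; intros x y.
  rewrite (lneg_iff _ _ HR), (rneg_iff _ _ HR), a_id.
  rewrite <- (a_id (g y)), ag. reflexivity.
Qed.

Section Prime.
Variable b : X -> X.
Hypothesis b_le : forall x y, le x y <-> le (b y) (b x).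
Hypothesis b_invol : forall x, b (b x) = x.
Hypothesis b_E : forall x, E x (b x).
Hypothesis b_aba : forall x, b x = a (b (a x)).

Local Notation prime R := (Dq_prime E a b R).

Lemma E_b_a x : E x (b (a x)).
Proof. exact (E_trans (a_E x) (b_E (a x))). Qed.

Lemma E_ba x y : E (b (a x)) (b y) <-> E x y.
Proof.
  split; intro H.
  - exact (E_trans (E_b_a x) (E_trans H (E_sym (b_E y)))).
  - exact (E_trans (E_sym (E_b_a x)) (E_trans H (b_E y))).
Qed.

Lemma prime_iff R x y : prime R x y <-> E x y /\ ~ R (b (a x)) (b y).
Proof.
  rewrite <- E_ba. unfold Dq_prime, comp, graph, rcompl; split.
  - intros [w [[v [[u [-> ->]] H]] ->]]. rewrite b_invol. exact H.
  - intro H. exists (b y). split; [|now rewrite b_invol].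
    exists (b (a x)). split; [exists (a x)|]; auto.
Qed.

Lemma g_b y : g (b y) = b (a y).
Proof. rewrite b_aba. apply ga. Qed.

Lemma bab_a x : b (a (b (a x))) = x.
Proof. rewrite <- b_aba. apply b_invol. Qed.

Lemma up_set_prime R : U R -> U (prime R).
Proof.
  intro HR. apply up_set_intro.
  - intros x y Hxy. now apply prime_iff in Hxy as [Exy _].
  - intros u v x y Huv xu vy. apply prime_iff in Huv as [Euv nR].
    apply prime_iff; split; [exact (up_set_mono up_set_full Euv xu vy)|].
    intro R'. apply nR. apply (up_set_mono HR R').
    + apply (proj1 (b_le _ _)), (proj1 (a_le _ _)), xu.
    + apply (proj1 (b_le _ _)), vy.
Qed.

Lemma prime_invol R : U R -> prime (prime R) = R.
Proof.
  intro HR. apply rel_ext; intros x y.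
  rewrite !prime_iff, bab_a, b_invol, E_ba.
  apply and_not_and_not_iff; [exact (up_set_E HR) | trivial].
Qed.

Lemma prime_join R S : prime (Dq_join R S) = Dq_meet (prime R) (prime S).
Proof.
  apply rel_ext; intros x y. unfold Dq_meet, Dq_join. rewrite !prime_iff. tauto.
Qed.

Lemma prime_lneg_iff R x y : U R ->
  prime (lneg R) x y <-> E x y /\ R (b (a y)) (b (a x)).
Proof.
  intro HR. rewrite prime_iff, (lneg_iff _ _ HR), g_b, E_ba.
  split; intros [Exy H]; split; auto.
  - apply NNPP; intro nR. exact (H (conj Exy nR)).
  - intros [_ nR]. exact (nR H).
Qed.

Lemma rneg_prime_iff R x y : U R ->
  rneg (prime R) x y <-> E x y /\ R (b (a y)) (b (a x)).
Proof.
  intro HR. rewrite (rneg_iff _ _ (up_set_prime HR)), prime_iff.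
  split; intros [Exy H]; split; auto.
  - apply NNPP; intro nR. apply H. split; [|exact nR].
    exact (E_trans (E_sym Exy) (a_E x)).
  - intros [_ nR]. exact (nR H).
Qed.

Lemma prime_lneg R : U R -> prime (lneg R) = rneg (prime R).
Proof.
  intro HR. apply rel_ext; intros x y.
  rewrite (prime_lneg_iff _ _ HR), (rneg_prime_iff _ _ HR). reflexivity.
Qed.

Lemma prime_comp R S : U R -> U S ->
  prime (comp R S) = lneg (comp (rneg (prime S)) (rneg (prime R))).
Proof.
  intros HR HS. apply rel_ext; intros x y.
  rewrite prime_iff, lneg_iff
    by exact (up_set_comp (up_set_rdiv up_set_zero (up_set_prime HS))
                          (up_set_rdiv up_set_zero (up_set_prime HR))).
  unfold comp at 1 2.
  setoid_rewrite (rneg_prime_iff _ _ HS). setoid_rewrite (rneg_prime_iff _ _ HR).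
  rewrite ag.
  split; intros [Exy H]; split; auto; intros [w Hw]; apply H.
  - destruct Hw as [[_ Sw] [_ Rw]]. exists (b (a w)). split; assumption.
  - destruct Hw as [Rw Sw]. exists (g (b w)). rewrite ag, b_invol.
    assert (E_gbw_w : E (g (b w)) w) by exact (E_trans (E_g (b w)) (E_sym (b_E w))).
    assert (E_w_by : E w (b y)) by exact (up_set_E HS Sw).
    assert (E_bax_w : E (b (a x)) w) by exact (up_set_E HR Rw).
    split; split; trivial.
    + apply E_trans with (b y); [exact (E_trans (E_g y) (b_E y))|].
      exact (E_sym (E_trans E_gbw_w E_w_by)).
    + apply E_trans with w; [exact E_gbw_w|].
      exact (E_sym (E_trans (E_b_a x) E_bax_w)).
Qed.

Lemma Dq_quasi_relation_algebra :
  is_quasi_relation_algebra U (@Dq_meet X) (@Dq_join X) (@comp X)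
    (Dq_ldiv E) (Dq_rdiv E) (Dq_one le) Z
    (fun R => lneg R) (fun R => rneg R) (fun R => prime R).
Proof.
  split; [exact Dq_residuated_lattice|].
  split; [exact up_set_zero|].
  split; [reflexivity|]. split; [reflexivity|].
  split; [exact up_set_prime|].
  split; [intros R HR; split; [apply lneg_rneg | apply rneg_lneg]; exact HR|].
  split; [exact prime_invol|].
  split; [intros; apply prime_join|].
  split; [exact prime_lneg|].
  intros R S HR HS. exact (prime_comp HR HS).
Qed.

End Prime.
End Negations.

End UpSets.

Theorem theorem3p15 (X : Type) (le E : rel X) (a b : X -> X)
  (Hpo : is_poset le) (HE : is_equivalence E) (HleE : subrel le E)
  (Ha : order_automorphism le a)
  (Hb : dual_order_automorphism le b) (Hbinv : self_inverse b)
  (HaE : subrel (graph a) E) (HbE : subrel (graph b) E)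
  (Hbab : graph b = comp (comp (graph a) (graph b)) (graph a)) :
  Dq_is_DqRA le E a b /\
  ((forall x, a x = x) -> Dq_is_DqRA le E a b /\ Dq_is_cyclic le E a).
Proof.
  destruct Hpo as [le_refl [_ le_trans]].
  destruct HE as [_ [E_sym E_trans]].
  destruct Ha as [[g [ga ag]] a_le].
  destruct Hb as [_ b_le].
  assert (a_E : forall x, E x (a x)) by (intro x; exact (HaE x _ eq_refl)).
  assert (b_E : forall x, E x (b x)) by (intro x; exact (HbE x _ eq_refl)).
  rewrite !comp_graph in Hbab.
  pose proof (graph_inj Hbab) as b_aba.
  assert (DqRA : Dq_is_DqRA le E a b).
  { split; [|apply Dq_distributive].
    exact (Dq_quasi_relation_algebra le_refl le_trans HleE E_sym E_trans
             a_le ag ga a_E b_le Hbinv b_E b_aba). }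
  split; [exact DqRA|]. intro a_id. split; [exact DqRA|].
  intros R HR. exact (lneg_eq_rneg_of_id le_refl HleE E_sym E_trans a_le ag a_E a_id HR).
Qed.
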